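(* Let $C\subset\mathbb{R}^2$ be compact and let $D$ be a closed disc whose center lies in $C$. Then \[\mathrm{diam}(C\cup D)\le\max\left(\mathrm{diam}(C)+\sqrt{\frac{2(\mathrm{area}(C\cup D)-\mathrm{area}(C))}{\pi}},\ \sqrt{\frac{4\,\mathrm{area}(C\cup D)}{\pi}}\right).\]
   Context: $\mathrm{area}$ denotes two-dimensional Lebesgue measure and $\mathrm{diam}(B)=\sup_{x,y\in B}\|x-y\|$ (Euclidean distance). *)

From Stdlib Require Import Reals Lra ClassicalEpsilon.
Open Scope R_scope.

Definition pt := (R * R)%type.
Definition dist2 (x y : pt) : R :=
  sqrt ((fst x - fst y)^2 + (snd x - snd y)^2).

Definition open2 (A : pt -> Prop) : Prop :=
  forall x, A x -> exists e, 0 < e /\ forall y, dist2 x y < e -> A y.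
Definition closed2 (A : pt -> Prop) : Prop := open2 (fun x => ~ A x).
Definition bounded2 (A : pt -> Prop) : Prop :=
  exists M, forall x, A x -> dist2 (0,0) x <= M.
(* Compactness in R^2 (Heine-Borel: closed and bounded). *)
Definition compact2 (A : pt -> Prop) : Prop := closed2 A /\ bounded2 A.

Definition union2 (A B : pt -> Prop) : pt -> Prop := fun x => A x \/ B x.
Definition closed_disc (c : pt) (r : R) : pt -> Prop :=
  fun x => dist2 c x <= r.

Definition dists (B : pt -> Prop) (d : R) : Prop :=
  exists x y, B x /\ B y /\ d = dist2 x y.
Definition diam (B : pt -> Prop) : R :=
  epsilon (inhabits 0) (fun d => is_lub (dists B) d).

(* Two-dimensional Lebesgue (outer) measure: infimum of the total area of
   countable covers by closed axis-parallel rectangles [a,b]x[c,d]. *)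
Definition rect := (R * R * R * R)%type.  (* (a, b, c, d) *)
Definition in_rect (q : rect) (x : pt) : Prop :=
  let '(a, b, c, d) := q in a <= fst x <= b /\ c <= snd x <= d.
Definition rect_ok (q : rect) : Prop :=
  let '(a, b, c, d) := q in a <= b /\ c <= d.
Definition rect_area (q : rect) : R :=
  let '(a, b, c, d) := q in (b - a) * (d - c).

Definition cover_sums (A : pt -> Prop) (s : R) : Prop :=
  exists q : nat -> rect,
    (forall n, rect_ok (q n)) /\
    (forall x, A x -> exists n, in_rect (q n) x) /\
    infinite_sum (fun n => rect_area (q n)) s.

Definition is_glb (E : R -> Prop) (m : R) : Prop :=
  (forall s, E s -> m <= s) /\ (forall m', (forall s, E s -> m' <= s) -> m' <= m).

Definition area (A : pt -> Prop) : R :=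
  epsilon (inhabits 0) (fun m => is_glb (cover_sums A) m).

(* They all come from the splitting
   inequality area (E ∩ R) + area (E \ R) <= area E for a rectangle R, and from
   area R >= (elementary area of R), proved by bisection.  Iterating the splitting
   over a staircase of disjoint rectangles gives area (disc of radius t) >= PI t^2,
   and over a fine grid gives additivity of area on sets at positive distance.

   Two points of D are at distance at most 2r <= sqrt (4 area (C ∪ D) / PI).  For x
   in C and y in D, |x - y| <= |x - c| + r; if this exceeds diam C by t > 0, put
   the centre p on the ray from x through c at distance diam C + η from x.  The half
   of the disc of radius t - η around p facing away from x lies in D and at distance
   at least η from C, so area (C ∪ D) >= area C + PI (t - η)^2 / 2 for every η > 0. *)

From Stdlib Require Import Reals Lra Lia ClassicalEpsilon Classical FunctionalExtensionality List Rgeom.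
From Coquelicot Require Coquelicot.
Open Scope R_scope.

(** * Series of nonnegative terms *)

Lemma sum_f_R0_mono f n m :
  (forall k, 0 <= f k) -> (n <= m)%nat -> sum_f_R0 f n <= sum_f_R0 f m.
Proof. intros Hf H; induction H; [lra|]. simpl; specialize (Hf (S m)); lra. Qed.

Lemma sum_f_R0_ge_term f n : (forall k, 0 <= f k) -> f n <= sum_f_R0 f n.
Proof.
intros Hf; destruct n as [|n]; simpl; [lra|].
pose proof (cond_pos_sum f n Hf); lra.
Qed.

Lemma infinite_sum_of_bounded f B :
  (forall k, 0 <= f k) -> (forall n, sum_f_R0 f n <= B) ->
  exists l, infinite_sum f l /\ l <= B.
Proof.
intros Hf HB.
assert (Hg : Un_growing (sum_f_R0 f)) by (intros n; simpl; specialize (Hf (S n)); lra).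
destruct (growing_cv _ Hg) as [l Hl]; [exists B; intros y [n ->]; apply HB|].
exists l; split; [exact Hl|].
apply Rnot_lt_le; intros HBl.
destruct (Hl (l - B)) as [N HN]; [lra|].
specialize (HN N (le_n _)); specialize (HB N).
unfold Rdist in HN; apply Rabs_def2 in HN; lra.
Qed.

Lemma divmod_affine K n j :
  (j < K)%nat -> ((K * n + j) / K = n)%nat /\ ((K * n + j) mod K = j)%nat.
Proof.
intros Hj.
assert (Hdiv : ((K * n + j) / K = n)%nat).
{ rewrite Nat.mul_comm, Nat.div_add_l by lia. rewrite Nat.div_small by lia. lia. }
split; [exact Hdiv|]. rewrite Nat.Div0.mod_eq, Hdiv. lia.
Qed.

Lemma sum_f_R0_blocks K g N : (1 <= K)%nat ->
  sum_f_R0 g (K * N + (K - 1)) =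
  sum_f_R0 (fun n => sum_f_R0 (fun j => g (K * n + j)%nat) (K - 1)) N.
Proof.
intros HK; induction N as [|N IH].
- simpl. replace (K * 0 + (K - 1))%nat with (K - 1)%nat by lia.
  apply sum_eq; intros; f_equal; lia.
- simpl sum_f_R0 at 2. rewrite <- IH.
  rewrite (tech2 g (K * N + (K - 1)) (K * S N + (K - 1))) by lia. f_equal.
  replace (K * S N + (K - 1) - S (K * N + (K - 1)))%nat with (K - 1)%nat by lia.
  apply sum_eq; intros; f_equal; lia.
Qed.

Lemma sum_f_R0_geom_half eta N : 0 <= eta -> sum_f_R0 (fun n => (1/2)^n * eta) N <= 2 * eta.
Proof.
intros Heta. rewrite <- scal_sum.
assert (Hg : sum_f_R0 (pow (1/2)) N = 2 - (1/2)^N).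
{ induction N as [|N IH]; simpl sum_f_R0; [simpl; lra|]. rewrite IH; simpl; lra. }
rewrite Hg. pose proof (pow_lt (1/2) N ltac:(lra)). nra.
Qed.

Lemma is_glb_exists (E : R -> Prop) :
  (exists x, E x) -> (forall s, E s -> 0 <= s) -> exists m, is_glb E m.
Proof.
intros [x Hx] H0.
destruct (completeness (fun y => E (- y))) as [m [Hub Hlub]].
- exists 0; intros y Hy; apply H0 in Hy; lra.
- exists (- x); rewrite Ropp_involutive; exact Hx.
- exists (- m); split.
  + intros s Hs. assert (- s <= m) by (apply Hub; rewrite Ropp_involutive; exact Hs). lra.
  + intros m' Hm'. assert (m <= - m') by (apply Hlub; intros y Hy; apply Hm' in Hy; lra). lra.
Qed.

(** * Outer area from rectangle covers *)

Definition rect_cover (X : pt -> Prop) (q : nat -> rect) : Prop :=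
  (forall n, rect_ok (q n)) /\ (forall x, X x -> exists n, in_rect (q n) x).

Lemma rect_area_nonneg q : rect_ok q -> 0 <= rect_area q.
Proof. destruct q as [[[a b] c] d]; simpl; intros [H1 H2]; nra. Qed.

Lemma rect_cover_area_nonneg X q : rect_cover X q -> forall n, 0 <= rect_area (q n).
Proof. intros [Hok _] n; apply rect_area_nonneg, Hok. Qed.

Lemma Rabs_le_norm a b : Rabs a <= sqrt (a^2 + b^2).
Proof. rewrite <- sqrt_Rsqr_abs. apply sqrt_le_1_alt. unfold Rsqr. nra. Qed.

Lemma norm_le_Rabs_plus a b : sqrt (a^2 + b^2) <= Rabs a + Rabs b.
Proof.
pose proof (Rabs_pos a); pose proof (Rabs_pos b).
rewrite <- (sqrt_Rsqr (Rabs a + Rabs b)) by lra.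
apply sqrt_le_1_alt. rewrite Rsqr_plus, <- !Rsqr_abs, !Rsqr_pow2.
nra.
Qed.

Lemma dist2_le_Rabs x y :
  dist2 x y <= Rabs (fst x - fst y) + Rabs (snd x - snd y).
Proof. apply norm_le_Rabs_plus. Qed.

Lemma Rabs_le_bounds x M : Rabs x <= M -> - M <= x <= M.
Proof. unfold Rabs; destruct (Rcase_abs x); lra. Qed.

Definition in_box (M : R) (x : pt) : Prop := Rabs (fst x) <= M /\ Rabs (snd x) <= M.

Lemma bounded2_box X : bounded2 X -> exists M, 0 <= M /\ forall x, X x -> in_box M x.
Proof.
intros [M HM]. exists (Rabs M); split; [apply Rabs_pos|].
intros x Hx. specialize (HM x Hx). unfold dist2 in HM. cbn [fst snd] in HM.
pose proof (Rabs_le_norm (0 - fst x) (0 - snd x)).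
pose proof (Rabs_le_norm (0 - snd x) (0 - fst x)).
rewrite Rplus_comm in H0. rewrite !Rminus_0_l, !Rabs_Ropp in *.
pose proof (Rle_abs M). split; lra.
Qed.

Lemma box_bounded2 X M : (forall x, X x -> in_box M x) -> bounded2 X.
Proof.
intros H. exists (M + M). intros x Hx. destruct (H x Hx).
pose proof (dist2_le_Rabs (0, 0) x). cbn [fst snd] in *.
rewrite !Rminus_0_l, !Rabs_Ropp in *. lra.
Qed.

Lemma bounded2_sub X Y : bounded2 Y -> (forall x, X x -> Y x) -> bounded2 X.
Proof. intros [M HM] H. exists M. auto. Qed.

Lemma bounded2_union X Y : bounded2 X -> bounded2 Y -> bounded2 (union2 X Y).
Proof.
intros [M HM] [N HN]. exists (Rmax M N). intros x [h|h].
- apply HM in h. pose proof (Rmax_l M N). lra.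
- apply HN in h. pose proof (Rmax_r M N). lra.
Qed.

Lemma cover_sums_nonneg X s : cover_sums X s -> 0 <= s.
Proof.
intros [q [Hok [_ Hs]]].
assert (Hq : forall n, 0 <= rect_area (q n)) by (intros n; apply rect_area_nonneg, Hok).
pose proof (sum_incr _ 0 s Hs Hq). pose proof (Hq 0%nat). simpl in *. lra.
Qed.

Lemma cover_sums_exists X : bounded2 X -> exists s, cover_sums X s.
Proof.
intros HX. destruct (bounded2_box X HX) as [M [HM0 HM]].
set (q := fun n : nat => match n with O => (-M, M, -M, M) | S _ => (0, 0, 0, 0) end).
assert (Hsum : forall n, sum_f_R0 (fun n => rect_area (q n)) n = (M + M) * (M + M)).
{ induction n as [|n IH]; simpl sum_f_R0; [simpl; ring|]. rewrite IH. simpl. ring. }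
exists ((M + M) * (M + M)), q. split; [|split].
- intros [|n]; simpl; lra.
- intros x Hx. exists 0%nat. destruct (HM x Hx) as [H1 H2].
  apply Rabs_le_bounds in H1, H2. simpl. lra.
- intros eps Heps. exists 0%nat. intros n _.
  rewrite Hsum. unfold Rdist. rewrite Rminus_diag, Rabs_R0. lra.
Qed.

Lemma area_glb X : bounded2 X -> is_glb (cover_sums X) (area X).
Proof.
intros HX. unfold area. apply epsilon_spec, is_glb_exists.
- apply cover_sums_exists, HX.
- apply cover_sums_nonneg.
Qed.

Lemma area_le_cover_sum X s : bounded2 X -> cover_sums X s -> area X <= s.
Proof. intros HX Hs. apply (area_glb X HX), Hs. Qed.

Lemma area_nonneg X : bounded2 X -> 0 <= area X.
Proof. intros HX. apply (area_glb X HX), cover_sums_nonneg. Qed.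

Lemma area_approx X eps :
  bounded2 X -> 0 < eps -> exists s, cover_sums X s /\ s < area X + eps.
Proof.
intros HX Heps. apply NNPP; intros Hno.
assert (area X + eps <= area X); [|lra].
apply (area_glb X HX). intros s Hs.
apply Rnot_lt_le; intros Hlt. apply Hno. exists s; auto.
Qed.

Lemma area_le_partial_sums X q B : bounded2 X -> rect_cover X q ->
  (forall N, sum_f_R0 (fun n => rect_area (q n)) N <= B) -> area X <= B.
Proof.
intros HX Hq HB.
destruct (infinite_sum_of_bounded _ B (rect_cover_area_nonneg X q Hq) HB) as [l [Hl HlB]].
enough (area X <= l) by lra.
apply area_le_cover_sum; [exact HX|]. exists q. destruct Hq. auto.
Qed.

(* [F n j] is rectangle number [K * n + j] of the cover. *)
Lemma area_le_block_sums X K (F : nat -> nat -> rect) B :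
  bounded2 X -> (1 <= K)%nat ->
  rect_cover X (fun m => F (m / K)%nat (m mod K)%nat) ->
  (forall N, sum_f_R0 (fun n => sum_f_R0 (fun j => rect_area (F n j)) (K - 1)) N <= B) ->
  area X <= B.
Proof.
intros HX HK Hc HB. apply (area_le_partial_sums X _ B HX Hc). intros M.
eapply Rle_trans.
{ apply (sum_f_R0_mono _ M (K * M + (K - 1)) (rect_cover_area_nonneg _ _ Hc)). nia. }
rewrite sum_f_R0_blocks by exact HK.
eapply Rle_trans; [|apply (HB M)]. right.
apply sum_eq; intros n _. apply sum_eq; intros j Hj.
destruct (divmod_affine K n j ltac:(lia)) as [-> ->]. reflexivity.
Qed.

Lemma area_mono X Y : bounded2 Y -> (forall x, X x -> Y x) -> area X <= area Y.
Proof.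
intros HY H. assert (HX : bounded2 X) by (eapply bounded2_sub; eauto).
apply (area_glb Y HY). intros s [q [Hok [Hc Hs]]].
apply area_le_cover_sum; [exact HX|]. exists q; auto.
Qed.

Lemma area_empty X : (forall x, ~ X x) -> area X = 0.
Proof.
intros H. assert (HX : bounded2 X) by (exists 0; intros x Hx; destruct (H x Hx)).
apply Rle_antisym; [|apply area_nonneg, HX].
apply (area_le_partial_sums X (fun _ => (0, 0, 0, 0))); [exact HX| |].
- split; [intros n; simpl; lra|]. intros x Hx; destruct (H x Hx).
- intros N. rewrite sum_eq_R0; [lra|]. intros; simpl; ring.
Qed.

Lemma area_union_le X Y :
  bounded2 X -> bounded2 Y -> area (union2 X Y) <= area X + area Y.
Proof.
intros HX HY. apply Rle_plus_epsilon; intros eps Heps.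
destruct (area_approx X (eps / 2) HX ltac:(lra)) as [s [[q [Hok [Hc Hs]]] Hlt]].
destruct (area_approx Y (eps / 2) HY ltac:(lra)) as [s' [[q' [Hok' [Hc' Hs']]] Hlt']].
set (F := fun n j => match j with O => q n | _ => q' n end).
enough (area (union2 X Y) <= s + s') by lra.
apply (area_le_block_sums _ 2 F); [apply bounded2_union; auto|lia| |].
- split.
  + intros m. unfold F. destruct (m mod 2)%nat; auto.
  + intros x [h|h].
    * destruct (Hc x h) as [n Hn]. exists (2 * n + 0)%nat.
      destruct (divmod_affine 2 n 0 ltac:(lia)) as [-> ->]. exact Hn.
    * destruct (Hc' x h) as [n Hn]. exists (2 * n + 1)%nat.
      destruct (divmod_affine 2 n 1 ltac:(lia)) as [-> ->]. exact Hn.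
- intros N. simpl (2 - 1)%nat. unfold F. simpl sum_f_R0 at 2.
  rewrite plus_sum.
  pose proof (sum_incr _ N s Hs (fun n => rect_area_nonneg _ (Hok n))).
  pose proof (sum_incr _ N s' Hs' (fun n => rect_area_nonneg _ (Hok' n))). lra.
Qed.

Definition reflect_rect (p : pt) (q : rect) : rect :=
  let '(a, b, c, d) := q in (2 * fst p - b, 2 * fst p - a, 2 * snd p - d, 2 * snd p - c).

Lemma rect_area_reflect p q : rect_area (reflect_rect p q) = rect_area q.
Proof. destruct q as [[[a b] c] d]. simpl. ring. Qed.

Lemma area_le_point_reflection X Y p : bounded2 X -> bounded2 Y ->
  (forall z, X z -> Y (2 * fst p - fst z, 2 * snd p - snd z)) -> area X <= area Y.
Proof.
intros HX HY H. apply (area_glb Y HY). intros s [q [Hok [Hc Hs]]].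
apply area_le_cover_sum; [exact HX|]. exists (fun n => reflect_rect p (q n)). split; [|split].
- intros n. specialize (Hok n). destruct (q n) as [[[a b] c] d]. simpl in *. lra.
- intros z Hz. destruct (Hc _ (H z Hz)) as [n Hn]. exists n. revert Hn.
  destruct (q n) as [[[a b] c] d]. simpl. lra.
- replace (fun n => rect_area (reflect_rect p (q n))) with (fun n => rect_area (q n));
    [exact Hs|]. apply functional_extensionality; intros n. symmetry; apply rect_area_reflect.
Qed.

Definition inter_rect (E : pt -> Prop) (q : rect) : pt -> Prop := fun z => E z /\ in_rect q z.
Definition diff_rect (E : pt -> Prop) (q : rect) : pt -> Prop := fun z => E z /\ ~ in_rect q z.

Definition clamp a b v := Rmin b (Rmax a v).

(* Piece [0] of [q] is its intersection with [R0]; pieces [1] to [4] are the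
   four strips of [q] left, right, below and above it. *)
Definition piece (R0 q : rect) (j : nat) : rect :=
  let '(a', b', c', d') := R0 in
  let '(a, b, c, d) := q in
  let x1 := clamp a b a' in let x2 := clamp a b b' in
  let y1 := clamp c d c' in let y2 := clamp c d d' in
  match j with
  | O => (x1, x2, y1, y2)
  | 1%nat => (a, x1, c, d)
  | 2%nat => (x2, b, c, d)
  | 3%nat => (x1, x2, c, y1)
  | _ => (x1, x2, y2, d)
  end.

Ltac clamp_lra := unfold clamp, Rmin, Rmax in *; repeat destruct Rle_dec; lra.

Lemma piece_ok R0 q j : rect_ok R0 -> rect_ok q -> rect_ok (piece R0 q j).
Proof.
destruct R0 as [[[a' b'] c'] d'], q as [[[a b] c] d]; simpl; intros [H1 H2] [H3 H4].
destruct j as [|[|[|[|j]]]]; simpl; split; clamp_lra.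
Qed.

Lemma piece_area R0 q :
  rect_area (piece R0 q 0) + sum_f_R0 (fun j => rect_area (piece R0 q (S j))) 3 = rect_area q.
Proof. destruct R0 as [[[a' b'] c'] d'], q as [[[a b] c] d]; simpl; ring. Qed.

Lemma piece_inter R0 q z : in_rect R0 z -> in_rect q z -> in_rect (piece R0 q 0) z.
Proof.
destruct R0 as [[[a' b'] c'] d'], q as [[[a b] c] d], z as [x y]; simpl.
intros [[H1 H2] [H3 H4]] [[H5 H6] [H7 H8]]. split; split; clamp_lra.
Qed.

Lemma piece_diff R0 q z : rect_ok R0 -> ~ in_rect R0 z -> in_rect q z ->
  exists j, (j < 4)%nat /\ in_rect (piece R0 q (S j)) z.
Proof.
destruct R0 as [[[a' b'] c'] d'], q as [[[a b] c] d], z as [x y]; simpl.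
intros [Ho1 Ho2] Hn [[H5 H6] [H7 H8]].
destruct (Rle_dec x (clamp a b a')); [exists 0%nat; simpl; split; [lia|lra]|].
destruct (Rle_dec (clamp a b b') x); [exists 1%nat; simpl; split; [lia|lra]|].
assert (a' <= x <= b') by clamp_lra.
destruct (Rle_dec y (clamp c d c')); [exists 2%nat; simpl; split; [lia|lra]|].
destruct (Rle_dec (clamp c d d') y); [exists 3%nat; simpl; split; [lia|lra]|].
exfalso. apply Hn. split; [lra|clamp_lra].
Qed.

Lemma area_split_rect E R0 : bounded2 E -> rect_ok R0 ->
  area (inter_rect E R0) + area (diff_rect E R0) <= area E.
Proof.
intros HE HR. apply Rle_plus_epsilon; intros eps Heps.
destruct (area_approx E eps HE Heps) as [s [[q [Hok [Hc Hs]]] Hlt]].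
assert (Hp : forall n j, 0 <= rect_area (piece R0 (q n) j))
  by (intros n j; apply rect_area_nonneg, piece_ok; auto).
set (inside := sum_f_R0 (fun n => rect_area (piece R0 (q n) 0))).
set (outside := sum_f_R0 (fun n => sum_f_R0 (fun j => rect_area (piece R0 (q n) (S j))) 3)).
assert (Hout_nonneg : forall n, 0 <= sum_f_R0 (fun j => rect_area (piece R0 (q n) (S j))) 3)
  by (intros n; apply cond_pos_sum; auto).
assert (Hsum : forall N M, inside N + outside M <= s).
{ intros N M.
  pose proof (sum_f_R0_mono _ N (max N M) (fun n => Hp n 0%nat) (Nat.le_max_l N M)).
  pose proof (sum_f_R0_mono _ M (max N M) Hout_nonneg (Nat.le_max_r N M)).
  pose proof (sum_incr _ (max N M) s Hs (fun n => rect_area_nonneg _ (Hok n))).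
  enough (inside (max N M) + outside (max N M) = sum_f_R0 (fun n => rect_area (q n)) (max N M))
    by (unfold inside, outside in *; lra).
  unfold inside, outside. rewrite <- plus_sum. apply sum_eq; intros; apply piece_area. }
assert (Hinter : forall M, area (inter_rect E R0) <= s - outside M).
{ intros M. apply (area_le_partial_sums _ (fun n => piece R0 (q n) 0)).
  - apply (bounded2_sub _ _ HE). intros z [h _]; exact h.
  - split; [intros n; apply piece_ok; auto|].
    intros z [h1 h2]. destruct (Hc z h1) as [n Hn]. exists n. apply piece_inter; auto.
  - intros N. specialize (Hsum N M). unfold inside in Hsum. lra. }
enough (area (diff_rect E R0) <= s - area (inter_rect E R0)) by lra.
apply (area_le_block_sums _ 4 (fun n j => piece R0 (q n) (S j))); [|lia| |].
- apply (bounded2_sub _ _ HE). intros z [h _]; exact h.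
- split; [intros n; apply piece_ok; auto|].
  intros z [h1 h2]. destruct (Hc z h1) as [n Hn].
  destruct (piece_diff R0 (q n) z HR h2 Hn) as [j [Hj Hin]].
  exists (4 * n + j)%nat. destruct (divmod_affine 4 n j Hj) as [-> ->]. exact Hin.
- intros M. specialize (Hinter M). unfold outside in Hinter. simpl (4 - 1)%nat. lra.
Qed.

(** * The area of a rectangle *)

Definition qa (q : rect) : R := let '(a, _, _, _) := q in a.
Definition qb (q : rect) : R := let '(_, b, _, _) := q in b.
Definition qc (q : rect) : R := let '(_, _, c, _) := q in c.
Definition qd (q : rect) : R := let '(_, _, _, d) := q in d.

Lemma rect_eta q : q = (qa q, qb q, qc q, qd q).
Proof. destruct q as [[[a b] c] d]; reflexivity. Qed.

Definition sub_rect (Q q : rect) : Prop :=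
  qa q <= qa Q /\ qb Q <= qb q /\ qc q <= qc Q /\ qd Q <= qd q.

Definition enlarge (q : rect) (dl : R) : rect :=
  let '(a, b, c, d) := q in (a - dl, b + dl, c - dl, d + dl).

Definition overlap_len a b a' b' := Rmax 0 (Rmin b b' - Rmax a a').

Definition overlap (q Q : rect) : R :=
  let '(a, b, c, d) := q in let '(a', b', c', d') := Q in
  overlap_len a b a' b' * overlap_len c d c' d'.

Ltac minmax_lra := unfold overlap_len, Rmin, Rmax; repeat destruct Rle_dec; lra.

Lemma overlap_len_nonneg a b a' b' : 0 <= overlap_len a b a' b'.
Proof. apply Rmax_l. Qed.

Lemma overlap_nonneg q Q : 0 <= overlap q Q.
Proof.
destruct q as [[[a b] c] d], Q as [[[a' b'] c'] d']; simpl.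
apply Rmult_le_pos; apply overlap_len_nonneg.
Qed.

Lemma overlap_le_area q Q : rect_ok q -> overlap q Q <= rect_area q.
Proof.
destruct q as [[[a b] c] d], Q as [[[a' b'] c'] d']; simpl; intros [H1 H2].
assert (overlap_len a b a' b' <= b - a) by minmax_lra.
assert (overlap_len c d c' d' <= d - c) by minmax_lra.
pose proof (overlap_len_nonneg a b a' b'); pose proof (overlap_len_nonneg c d c' d').
apply Rmult_le_compat; lra.
Qed.

Lemma overlap_sub q Q : rect_ok Q -> sub_rect Q q -> overlap q Q = rect_area Q.
Proof.
rewrite (rect_eta q), (rect_eta Q); unfold sub_rect; simpl; intros [H1 H2] [H3 [H4 [H5 H6]]].
f_equal; minmax_lra.
Qed.

Definition quarter (Q : rect) (i : nat) : rect :=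
  let '(a, b, c, d) := Q in
  let m := (a + b) / 2 in let n := (c + d) / 2 in
  match i with
  | O => (a, m, c, n)
  | 1%nat => (m, b, c, n)
  | 2%nat => (a, m, n, d)
  | _ => (m, b, n, d)
  end.

Lemma quarter_ok Q i : rect_ok Q -> rect_ok (quarter Q i).
Proof. destruct Q as [[[a b] c] d]; simpl; intros; destruct i as [|[|[|i]]]; simpl; lra. Qed.

Lemma quarter_sub Q i : rect_ok Q -> sub_rect (quarter Q i) Q.
Proof.
destruct Q as [[[a b] c] d]; unfold sub_rect; simpl; intros.
destruct i as [|[|[|i]]]; simpl; lra.
Qed.

Lemma quarter_sides Q i :
  qb (quarter Q i) - qa (quarter Q i) = (qb Q - qa Q) / 2 /\
  qd (quarter Q i) - qc (quarter Q i) = (qd Q - qc Q) / 2.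
Proof. destruct Q as [[[a b] c] d]; destruct i as [|[|[|i]]]; simpl; lra. Qed.

Lemma area_quarters Q :
  rect_area Q = sum_f_R0 (fun i => rect_area (quarter Q i)) 3.
Proof. destruct Q as [[[a b] c] d]; simpl; field. Qed.

Lemma overlap_quarters q Q : rect_ok Q ->
  overlap q Q = sum_f_R0 (fun i => overlap q (quarter Q i)) 3.
Proof.
destruct q as [[[a b] c] d], Q as [[[a' b'] c'] d']; simpl; intros [H1 H2].
assert (Hx : overlap_len a b a' b'
             = overlap_len a b a' ((a' + b') / 2) + overlap_len a b ((a' + b') / 2) b')
  by minmax_lra.
assert (Hy : overlap_len c d c' d'
             = overlap_len c d c' ((c' + d') / 2) + overlap_len c d ((c' + d') / 2) d')
  by minmax_lra.
rewrite Hx, Hy. ring.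
Qed.

Lemma nested_intervals (a b : nat -> R) :
  (forall k, a k <= a (S k)) -> (forall k, b (S k) <= b k) -> (forall k, a k <= b k) ->
  exists x, forall k, a k <= x <= b k.
Proof.
intros Ha Hb Hab.
assert (Hcross : forall j k, a j <= b k).
{ intros j k. destruct (Nat.le_ge_cases j k) as [H|H].
  - pose proof (growing_prop a k j Ha H). specialize (Hab k). lra.
  - pose proof (decreasing_prop b k j Hb H). specialize (Hab j). lra. }
destruct (completeness (fun x => exists k, x = a k)) as [x [Hub Hlub]].
- exists (b 0%nat). intros y [k ->]. apply Hcross.
- exists (a 0%nat), 0%nat. reflexivity.
- exists x. intros k. split.
  + apply Hub. exists k. reflexivity.
  + apply Hlub. intros y [j ->]. apply Hcross.
Qed.

Lemma nested_rects_point (Q : nat -> rect) :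
  (forall k, rect_ok (Q k)) -> (forall k, sub_rect (Q (S k)) (Q k)) ->
  exists p, forall k, in_rect (Q k) p.
Proof.
intros Hok Hsub.
assert (Hok' : forall k, qa (Q k) <= qb (Q k) /\ qc (Q k) <= qd (Q k)).
{ intros k. specialize (Hok k). rewrite (rect_eta (Q k)) in Hok. exact Hok. }
destruct (nested_intervals (fun k => qa (Q k)) (fun k => qb (Q k))) as [x Hx];
  try (intros k; specialize (Hsub k); specialize (Hok' k); unfold sub_rect in *; simpl; lra).
destruct (nested_intervals (fun k => qc (Q k)) (fun k => qd (Q k))) as [y Hy];
  try (intros k; specialize (Hsub k); specialize (Hok' k); unfold sub_rect in *; simpl; lra).
exists (x, y). intros k. rewrite (rect_eta (Q k)). simpl. split; [apply Hx|apply Hy].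
Qed.

Lemma bisection_point (P : rect -> Prop) R0 :
  rect_ok R0 -> P R0 ->
  (forall Q, rect_ok Q -> P Q -> exists i, P (quarter Q i)) ->
  exists p, in_rect R0 p /\ forall k, exists Q, P Q /\ in_rect Q p /\
    qb Q - qa Q = (qb R0 - qa R0) * (1/2)^k /\ qd Q - qc Q = (qd R0 - qc R0) * (1/2)^k.
Proof.
intros HR HP Hstep.
destruct (choice (fun Q i => rect_ok Q -> P Q -> P (quarter Q i))) as [sel Hsel].
{ intros Q. destruct (classic (rect_ok Q /\ P Q)) as [[H1 H2]|H].
  - destruct (Hstep Q H1 H2) as [i Hi]. exists i. auto.
  - exists 0%nat. intros H1 H2. exfalso. auto. }
set (Qs := fun k => Nat.iter k (fun Q => quarter Q (sel Q)) R0).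
assert (HQs : forall k, rect_ok (Qs k) /\ P (Qs k) /\
    qb (Qs k) - qa (Qs k) = (qb R0 - qa R0) * (1/2)^k /\
    qd (Qs k) - qc (Qs k) = (qd R0 - qc R0) * (1/2)^k).
{ induction k as [|k [Hok [HPk [Hx Hy]]]]; [simpl; repeat split; auto; lra|].
  change (Qs (S k)) with (quarter (Qs k) (sel (Qs k))).
  destruct (quarter_sides (Qs k) (sel (Qs k))) as [Hx' Hy'].
  repeat split; [apply quarter_ok; auto|apply Hsel; auto| |]; simpl pow; lra. }
destruct (nested_rects_point Qs) as [p Hp].
- intros k. apply HQs.
- intros k. apply quarter_sub, HQs.
- exists p. split; [apply (Hp 0%nat)|]. intros k. exists (Qs k).
  destruct (HQs k) as [_ [HPk [Hx Hy]]]. auto.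
Qed.

Lemma enlarge_area_close q eps : rect_ok q -> 0 < eps ->
  exists dl, 0 < dl /\ rect_area (enlarge q dl) <= rect_area q + eps.
Proof.
destruct q as [[[a b] c] d]; simpl; intros [H1 H2] Heps.
set (K := 2 * ((b - a) + (d - c)) + 4).
assert (HK : 0 < K) by (unfold K; lra).
exists (Rmin 1 (eps / K)). split.
- apply Rmin_glb_lt; [lra|]. apply Rdiv_lt_0_compat; lra.
- set (dl := Rmin 1 (eps / K)).
  assert (Hdl1 : dl <= 1) by apply Rmin_l.
  assert (HdlK : dl * K <= eps).
  { assert (dl <= eps / K) by apply Rmin_r.
    apply (Rmult_le_compat_r K) in H; [|lra]. unfold Rdiv in H.
    rewrite Rmult_assoc, Rinv_l, Rmult_1_r in H by lra. exact H. }
  assert (0 < dl) by (apply Rmin_glb_lt; [lra|apply Rdiv_lt_0_compat; lra]).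
  unfold K in HdlK. nra.
Qed.

Lemma sub_rect_enlarge q Q p dl : in_rect q p -> in_rect Q p -> rect_ok Q ->
  qb Q - qa Q <= dl -> qd Q - qc Q <= dl -> sub_rect Q (enlarge q dl).
Proof.
rewrite (rect_eta q), (rect_eta Q). unfold sub_rect. destruct p as [x y]. simpl. lra.
Qed.

Lemma overlap_sums_quarter (f : nat -> rect) be Q : rect_ok Q ->
  (forall N, sum_f_R0 (fun n => overlap (f n) Q) N <= be * rect_area Q) ->
  exists i, forall N,
    sum_f_R0 (fun n => overlap (f n) (quarter Q i)) N <= be * rect_area (quarter Q i).
Proof.
intros HQ HB. apply NNPP; intros Hno.
set (S i N := sum_f_R0 (fun n => overlap (f n) (quarter Q i)) N).
assert (Hbad : forall i, exists N, be * rect_area (quarter Q i) < S i N).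
{ intros i. apply NNPP; intros H. apply Hno. exists i. intros N.
  apply Rnot_lt_le; intros Hlt. apply H. eauto. }
destruct (choice _ Hbad) as [Nq HNq].
set (N := (Nq 0 + Nq 1 + Nq 2 + Nq 3)%nat).
assert (Hmono : forall i, (Nq i <= N)%nat -> S i (Nq i) <= S i N).
{ intros i Hi. apply sum_f_R0_mono; [intros; apply overlap_nonneg|exact Hi]. }
pose proof (Hmono 0%nat ltac:(unfold N; lia)); pose proof (HNq 0%nat).
pose proof (Hmono 1%nat ltac:(unfold N; lia)); pose proof (HNq 1%nat).
pose proof (Hmono 2%nat ltac:(unfold N; lia)); pose proof (HNq 2%nat).
pose proof (Hmono 3%nat ltac:(unfold N; lia)); pose proof (HNq 3%nat).
specialize (HB N).
erewrite sum_eq in HB by (intros; apply overlap_quarters, HQ).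
rewrite area_quarters in HB. simpl sum_f_R0 at 2 in HB.
rewrite !plus_sum in HB. unfold S in *. simpl in HB. lra.
Qed.

Lemma enlarge_ok q dl : rect_ok q -> 0 <= dl -> rect_ok (enlarge q dl).
Proof. destruct q as [[[a b] c] d]; simpl; lra. Qed.

Lemma exists_pow_half_lt w e : 0 < e -> exists k, w * (1/2)^k < e.
Proof.
intros He. destruct (Rle_lt_dec w 0) as [Hw|Hw].
- exists 0%nat. simpl. lra.
- destruct (pow_lt_1_zero (1/2) ltac:(rewrite Rabs_pos_eq; lra) (e / w)) as [k Hk].
  { apply Rdiv_lt_0_compat; lra. }
  exists k. specialize (Hk k (le_n _)). rewrite Rabs_pos_eq in Hk by (apply pow_le; lra).
  apply (Rmult_lt_compat_l w) in Hk; [|lra].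
  replace (w * (e / w)) with e in Hk by (field; lra). exact Hk.
Qed.

Lemma enlarged_cover (q : nat -> rect) s eta :
  (forall n, rect_ok (q n)) -> infinite_sum (fun n => rect_area (q n)) s -> 0 < eta ->
  exists dl, (forall n, 0 < dl n) /\
    forall N, sum_f_R0 (fun n => rect_area (enlarge (q n) (dl n))) N <= s + 2 * eta.
Proof.
intros Hok Hs Heta.
destruct (choice (fun n dl => 0 < dl /\
    rect_area (enlarge (q n) dl) <= rect_area (q n) + (1/2)^n * eta)) as [dl Hdl].
{ intros n. apply enlarge_area_close; [apply Hok|].
  apply Rmult_lt_0_compat; [apply pow_lt|]; lra. }
exists dl. split; [apply Hdl|]. intros N.
eapply Rle_trans; [apply sum_growing; intros n; apply (proj2 (Hdl n))|].
rewrite plus_sum.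
pose proof (sum_incr _ N s Hs (fun n => rect_area_nonneg _ (Hok n))).
pose proof (sum_f_R0_geom_half eta N ltac:(lra)). lra.
Qed.

Lemma not_overlap_sums_le_of_covered (f : nat -> rect) be Q m :
  be < 1 -> 0 < rect_area Q -> overlap (f m) Q = rect_area Q ->
  ~ (forall N, sum_f_R0 (fun n => overlap (f n) Q) N <= be * rect_area Q).
Proof.
intros Hbe HQ Hm HP. specialize (HP m).
pose proof (sum_f_R0_ge_term (fun n => overlap (f n) Q) m (fun n => overlap_nonneg _ _)).
simpl in *. nra.
Qed.

(* Bisection: if [R0] had more area than a cover, a quarter, a quarter of a
   quarter, ... would keep being covered "less than its area" by the slightly
   enlarged cover; but the nested quarters shrink to a point interior to one
   enlarged rectangle, which covers them entirely. *)
Lemma rect_area_le_cover_sum R0 s :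
  rect_ok R0 -> cover_sums (in_rect R0) s -> rect_area R0 <= s.
Proof.
intros HR Hs. pose proof (cover_sums_nonneg _ _ Hs) as Hs0.
destruct Hs as [q [Hok [Hc Hsum]]].
apply Rnot_lt_le; intros Hlt. remember (rect_area R0) as A eqn:HA.
assert (Hsides : 0 < qb R0 - qa R0 /\ 0 < qd R0 - qc R0).
{ revert HR Hlt. rewrite HA, (rect_eta R0). simpl. intros [H1 H2] Hlt.
  split; apply Rnot_le_lt; intros H; nra. }
set (eta := (A - s) / 4).
destruct (enlarged_cover q s eta Hok Hsum ltac:(unfold eta; lra)) as [dl [Hdl Henl]].
set (be := (s + 2 * eta) / A).
assert (Hbe : be < 1).
{ unfold be. apply (Rmult_lt_reg_r A); [lra|].
  unfold Rdiv. rewrite Rmult_assoc, Rinv_l by lra. unfold eta. lra. }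
set (P := fun Q => forall N,
  sum_f_R0 (fun n => overlap (enlarge (q n) (dl n)) Q) N <= be * rect_area Q).
assert (HP0 : P R0).
{ intros N. replace (be * rect_area R0) with (s + 2 * eta) by (rewrite <- HA; unfold be; field; lra).
  eapply Rle_trans; [|apply (Henl N)]. apply sum_growing. intros n.
  apply overlap_le_area, enlarge_ok; [apply Hok|left; apply Hdl]. }
destruct (bisection_point P R0 HR HP0) as [p [HpR Hp]].
{ intros Q HQ HPQ. apply overlap_sums_quarter; auto. }
destruct (Hc p HpR) as [m Hm].
destruct (exists_pow_half_lt ((qb R0 - qa R0) + (qd R0 - qc R0)) (dl m) (Hdl m)) as [k Hk].
destruct (Hp k) as [Q [HPQ [HpQ [Hx Hy]]]].
pose proof (pow_lt (1/2) k ltac:(lra)).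
assert (HQx : 0 < qb Q - qa Q) by (rewrite Hx; apply Rmult_lt_0_compat; lra).
assert (HQy : 0 < qd Q - qc Q) by (rewrite Hy; apply Rmult_lt_0_compat; lra).
assert (HQ : rect_ok Q) by (rewrite (rect_eta Q); simpl; lra).
apply (not_overlap_sums_le_of_covered (fun n => enlarge (q n) (dl n)) be Q m Hbe); [|apply overlap_sub; [exact HQ|]|exact HPQ].
- rewrite (rect_eta Q); simpl; nra.
- apply (sub_rect_enlarge _ _ p); auto; nra.
Qed.

Lemma rect_bounded2 q : bounded2 (in_rect q).
Proof.
apply (box_bounded2 _ (Rabs (qa q) + Rabs (qb q) + Rabs (qc q) + Rabs (qd q))).
intros [x y]. rewrite (rect_eta q). unfold in_box. simpl. intros [[H1 H2] [H3 H4]].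
pose proof (Rabs_pos (qa q)); pose proof (Rabs_pos (qb q));
pose proof (Rabs_pos (qc q)); pose proof (Rabs_pos (qd q)).
pose proof (Rle_abs (qb q)); pose proof (Rle_abs (- qa q));
pose proof (Rle_abs (qd q)); pose proof (Rle_abs (- qc q)).
rewrite !Rabs_Ropp in *. split; apply Rabs_le; lra.
Qed.

Lemma area_rect q : rect_ok q -> rect_area q <= area (in_rect q).
Proof.
intros Hq. apply (area_glb _ (rect_bounded2 q)). intros s Hs.
apply rect_area_le_cover_sum; auto.
Qed.

(** * Disjoint rectangles and separated sets *)

Fixpoint fsum (g : nat -> R) (n : nat) : R :=
  match n with O => 0 | S n => fsum g n + g n end.

Definition disjoint_rects (q q' : rect) : Prop := forall z, in_rect q z -> ~ in_rect q' z.

Lemma fsum_rect_area_le_area E (f : nat -> rect) n : bounded2 E ->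
  (forall i, (i < n)%nat -> rect_ok (f i)) ->
  (forall i j, (i < j < n)%nat -> disjoint_rects (f i) (f j)) ->
  (forall i z, (i < n)%nat -> in_rect (f i) z -> E z) ->
  fsum (fun i => rect_area (f i)) n <= area E.
Proof.
revert E; induction n as [|n IH]; intros E HE Hok Hdisj Hin; simpl.
{ apply area_nonneg, HE. }
pose proof (area_split_rect E (f n) HE (Hok n ltac:(lia))).
assert (HEi : bounded2 (inter_rect E (f n)))
  by (apply (bounded2_sub _ _ HE); intros z [h _]; exact h).
assert (HEd : bounded2 (diff_rect E (f n)))
  by (apply (bounded2_sub _ _ HE); intros z [h _]; exact h).
assert (area (in_rect (f n)) <= area (inter_rect E (f n))).
{ apply area_mono; [exact HEi|]. intros z Hz. split; [apply (Hin n); auto|exact Hz]. }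
pose proof (area_rect (f n) (Hok n ltac:(lia))).
assert (fsum (fun i => rect_area (f i)) n <= area (diff_rect E (f n))).
{ apply IH; [exact HEd|intros; apply Hok; lia|intros; apply Hdisj; lia|].
  intros i z Hi Hz. split; [apply (Hin i); auto|]. apply (Hdisj i n); auto. }
lra.
Qed.

Fixpoint area_slices (E : pt -> Prop) (L : list rect) : R :=
  match L with
  | nil => 0
  | q :: L' => area (inter_rect E q) + area_slices (diff_rect E q) L'
  end.

Lemma area_slices_le E L : bounded2 E -> Forall rect_ok L -> area_slices E L <= area E.
Proof.
revert E; induction L as [|q L IH]; intros E HE HL; simpl.
{ apply area_nonneg, HE. }
inversion HL as [|? ? Hq HL']; subst.
assert (HEd : bounded2 (diff_rect E q))
  by (apply (bounded2_sub _ _ HE); intros z [h _]; exact h).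
pose proof (IH _ HEd HL'). pose proof (area_split_rect E q HE Hq). lra.
Qed.

Lemma area_le_slices E L : bounded2 E ->
  (forall z, E z -> exists q, In q L /\ in_rect q z) -> area E <= area_slices E L.
Proof.
revert E; induction L as [|q L IH]; intros E HE Hcov; simpl.
{ rewrite area_empty; [lra|]. intros z Hz. destruct (Hcov z Hz) as [q [[] _]]. }
assert (HEi : bounded2 (inter_rect E q))
  by (apply (bounded2_sub _ _ HE); intros z [h _]; exact h).
assert (HEd : bounded2 (diff_rect E q))
  by (apply (bounded2_sub _ _ HE); intros z [h _]; exact h).
assert (area (diff_rect E q) <= area_slices (diff_rect E q) L).
{ apply IH; [exact HEd|]. intros z [Hz Hnq].
  destruct (Hcov z Hz) as [q' [[<-|Hq'] Hzq']]; [contradiction|eauto]. }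
assert (area E <= area (union2 (inter_rect E q) (diff_rect E q))).
{ apply area_mono; [apply bounded2_union; auto|].
  intros z Hz. destruct (classic (in_rect q z)); [left|right]; split; auto. }
pose proof (area_union_le _ _ HEi HEd). lra.
Qed.

Lemma area_slices_add X Y Z L : bounded2 Z ->
  (forall z, X z -> Z z) -> (forall z, Y z -> Z z) ->
  (forall q, In q L -> (forall x, X x -> ~ in_rect q x) \/ (forall y, Y y -> ~ in_rect q y)) ->
  area_slices X L + area_slices Y L <= area_slices Z L.
Proof.
revert X Y Z; induction L as [|q L IH]; intros X Y Z HZ HX HY Hsep; simpl; [lra|].
assert (HZd : bounded2 (diff_rect Z q))
  by (apply (bounded2_sub _ _ HZ); intros z [h _]; exact h).
assert (Hrest : area_slices (diff_rect X q) L + area_slices (diff_rect Y q) L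
        <= area_slices (diff_rect Z q) L).
{ apply IH; [exact HZd| intros z [h1 h2]; split; auto| intros z [h1 h2]; split; auto|].
  intros q' Hq'. destruct (Hsep q' (or_intror Hq')) as [Hm|Hm]; [left|right];
    intros z [h _]; apply Hm, h. }
assert (HZi : bounded2 (inter_rect Z q))
  by (apply (bounded2_sub _ _ HZ); intros z [h _]; exact h).
destruct (Hsep q (or_introl eq_refl)) as [H|H].
- rewrite (area_empty (inter_rect X q)) by (intros z [h1 h2]; exact (H z h1 h2)).
  assert (area (inter_rect Y q) <= area (inter_rect Z q))
    by (apply area_mono; [exact HZi|intros z [h1 h2]; split; auto]).
  lra.
- rewrite (area_empty (inter_rect Y q)) by (intros z [h1 h2]; exact (H z h1 h2)).
  assert (area (inter_rect X q) <= area (inter_rect Z q))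
    by (apply area_mono; [exact HZi|intros z [h1 h2]; split; auto]).
  lra.
Qed.

Lemma exists_grid_cell h x0 x k : 0 < h -> (1 <= k)%nat -> x0 <= x <= x0 + INR k * h ->
  exists i, (i < k)%nat /\ x0 + INR i * h <= x <= x0 + INR (S i) * h.
Proof.
intros Hh Hk. induction Hk as [|k Hk IH]; intros Hx.
- exists 0%nat. simpl in *. split; [lia|lra].
- destruct (Rle_dec x (x0 + INR k * h)).
  + destruct IH as [i [Hi Hi']]; [lra|]. exists i. split; [lia|exact Hi'].
  + exists k. split; [lia|lra].
Qed.

Definition grid_cell (M h : R) (i j : nat) : rect :=
  (- M + INR i * h, - M + INR (S i) * h, - M + INR j * h, - M + INR (S j) * h).

Definition grid (M h : R) (k : nat) : list rect :=
  flat_map (fun i => map (fun j => grid_cell M h i j) (seq 0 k)) (seq 0 k).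

Lemma in_grid M h k q : In q (grid M h k) -> exists i j, q = grid_cell M h i j.
Proof.
unfold grid. intros Hq. apply in_flat_map in Hq as [i [_ Hq]].
apply in_map_iff in Hq as [j [<- _]]. eauto.
Qed.

Lemma fine_rect_cover E eps : bounded2 E -> 0 < eps ->
  exists L, Forall rect_ok L /\ (forall z, E z -> exists q, In q L /\ in_rect q z) /\
    (forall q x y, In q L -> in_rect q x -> in_rect q y -> dist2 x y < eps).
Proof.
intros HE Heps. destruct (bounded2_box _ HE) as [M0 [HM0 HM]].
set (M := M0 + 1).
destruct (INR_archimed (eps / 4) (2 * M)) as [k Hk]; [lra|].
assert (Hk1 : (1 <= k)%nat) by (destruct k; [simpl in Hk; unfold M in Hk; lra|lia]).
assert (HkR : 0 < INR k) by (apply lt_0_INR; lia).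
set (h := 2 * M / INR k).
assert (Hh : 0 < h) by (apply Rdiv_lt_0_compat; unfold M; lra).
assert (Hh4 : h < eps / 4).
{ apply (Rmult_lt_reg_r (INR k)); [exact HkR|]. unfold h, Rdiv.
  rewrite Rmult_assoc, Rinv_l by lra. lra. }
assert (HkM : - M + INR k * h = M) by (unfold h; field; lra).
exists (grid M h k). split; [|split].
- apply Forall_forall. intros q Hq. apply in_grid in Hq as [i [j ->]].
  unfold grid_cell, rect_ok; rewrite !S_INR; lra.
- intros z Hz. destruct (HM z Hz) as [H1 H2].
  apply Rabs_le_bounds in H1, H2.
  destruct (exists_grid_cell h (- M) (fst z) k Hh Hk1) as [i [Hi Hzi]]; [unfold M in *; lra|].
  destruct (exists_grid_cell h (- M) (snd z) k Hh Hk1) as [j [Hj Hzj]]; [unfold M in *; lra|].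
  exists (grid_cell M h i j). split.
  + apply in_flat_map. exists i. split; [apply in_seq; lia|].
    apply in_map_iff. exists j. split; [reflexivity|apply in_seq; lia].
  + destruct z; simpl in *; lra.
- intros q x y Hq Hx Hy. apply in_grid in Hq as [i [j ->]].
  unfold grid_cell, in_rect in Hx, Hy. rewrite !S_INR in Hx, Hy.
  eapply Rle_lt_trans; [apply dist2_le_Rabs|].
  assert (Rabs (fst x - fst y) <= h) by (apply Rabs_le; lra).
  assert (Rabs (snd x - snd y) <= h) by (apply Rabs_le; lra). lra.
Qed.

Lemma area_add_separated X Y eps : bounded2 X -> bounded2 Y -> 0 < eps ->
  (forall x y, X x -> Y y -> eps <= dist2 x y) -> area X + area Y <= area (union2 X Y).
Proof.
intros HX HY Heps Hsep.
assert (HXY : bounded2 (union2 X Y)) by (apply bounded2_union; auto).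
destruct (fine_rect_cover _ eps HXY Heps) as [L [Hok [Hcov Hsmall]]].
pose proof (area_le_slices X L HX (fun z Hz => Hcov z (or_introl Hz))).
pose proof (area_le_slices Y L HY (fun z Hz => Hcov z (or_intror Hz))).
pose proof (area_slices_le _ L HXY Hok).
enough (area_slices X L + area_slices Y L <= area_slices (union2 X Y) L) by lra.
apply area_slices_add; [exact HXY|intros z Hz; left; exact Hz|intros z Hz; right; exact Hz|].
intros q Hq. destruct (classic (exists x, X x /\ in_rect q x)) as [[x [Hx Hxq]]|Hno].
- right. intros y Hy Hyq. pose proof (Hsep x y Hx Hy). pose proof (Hsmall q x y Hq Hxq Hyq). lra.
- left. intros x Hx Hxq. apply Hno. eauto.
Qed.

(** * The area of a disc *)

Lemma fsum_le g h n : (forall i, (i < n)%nat -> g i <= h i) -> fsum g n <= fsum h n.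
Proof.
induction n as [|n IH]; intros H; simpl; [lra|].
pose proof (H n ltac:(lia)). enough (fsum g n <= fsum h n) by lra.
apply IH. intros; apply H; lia.
Qed.

Lemma fsum_ext g h n : (forall i, (i < n)%nat -> g i = h i) -> fsum g n = fsum h n.
Proof. intros H. apply Rle_antisym; apply fsum_le; intros i Hi; rewrite H; auto; lra. Qed.

Lemma fsum_telescope g n : fsum (fun i => g (S i) - g i) n = g n - g 0%nat.
Proof. induction n as [|n IH]; simpl; [lra|]. rewrite IH. lra. Qed.

Lemma fsum_shift h n : fsum (fun i => h (S i)) n = fsum h n + h n - h 0%nat.
Proof. induction n as [|n IH]; simpl; [lra|]. rewrite IH. lra. Qed.

Lemma fsum_scal a g n : fsum (fun i => a * g i) n = a * fsum g n.
Proof. induction n as [|n IH]; simpl; [lra|]. rewrite IH. lra. Qed.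

Lemma fsum_add g n m : fsum g (n + m) = fsum g n + fsum (fun i => g (n + i)%nat) m.
Proof.
induction m as [|m IH]; simpl; [rewrite Nat.add_0_r; lra|].
rewrite Nat.add_succ_r. simpl. rewrite IH. lra.
Qed.

Section Cos2Primitive.
Import Coquelicot.Coquelicot.

Lemma derivable_pt_lim_cos2_primitive c :
  derivable_pt_lim (fun x => (x + sin x * cos x) / 2) c (cos c ^ 2).
Proof.
apply is_derive_Reals. auto_derive; [exact I|].
pose proof (sin2_cos2 c). unfold Rsqr in *. nra.
Qed.

End Cos2Primitive.

Lemma cos_le_of_le a b : 0 <= a -> a <= b -> b <= PI -> cos b <= cos a.
Proof.
intros. destruct (Req_dec a b) as [->|]; [lra|]. left. apply cos_decreasing_1; lra.
Qed.

Lemma sin_sub_ge a b : 0 <= a -> a <= b -> b <= PI / 2 -> (b - a) * cos b <= sin b - sin a.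
Proof.
intros. pose proof PI_RGT_0. destruct (Req_dec a b) as [->|]; [lra|].
destruct (MVT_cor2 sin cos a b ltac:(lra) (fun c _ => derivable_pt_lim_sin c)) as [c [-> Hc]].
pose proof (cos_le_of_le c b ltac:(lra) ltac:(lra) ltac:(lra)). nra.
Qed.

Lemma cos2_primitive_sub_le a b : 0 <= a -> a <= b -> b <= PI / 2 ->
  (b + sin b * cos b) / 2 - (a + sin a * cos a) / 2 <= (b - a) * cos a ^ 2.
Proof.
intros. pose proof PI_RGT_0. destruct (Req_dec a b) as [->|]; [lra|].
destruct (MVT_cor2 _ _ a b ltac:(lra) (fun c _ => derivable_pt_lim_cos2_primitive c))
  as [c [-> Hc]].
pose proof (cos_le_of_le a c ltac:(lra) ltac:(lra) ltac:(lra)).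
pose proof (cos_ge_0 c ltac:(lra) ltac:(lra)).
assert (cos c ^ 2 <= cos a ^ 2) by (simpl; nra). nra.
Qed.

Definition angle (N i : nat) : R := INR i * (PI / 2) / INR N.

Section Angles.
Variable N : nat.
Hypothesis HN : (1 <= N)%nat.

Let HN_pos : 0 < INR N.
Proof. apply lt_0_INR; lia. Qed.

Lemma angle_range i : (i <= N)%nat -> 0 <= angle N i <= PI / 2.
Proof.
intros Hi. unfold angle. pose proof PI_RGT_0. apply le_INR in Hi. pose proof (pos_INR i).
split.
- apply Rmult_le_pos; [nra|]. left; apply Rinv_0_lt_compat, HN_pos.
- apply (Rmult_le_reg_r (INR N)); [exact HN_pos|].
  unfold Rdiv. rewrite Rmult_assoc, Rinv_l by (pose proof HN_pos; lra). nra.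
Qed.

Lemma angle_step i : angle N (S i) - angle N i = PI / 2 / INR N.
Proof. unfold angle. rewrite S_INR. field. pose proof HN_pos; lra. Qed.

Lemma angle_last : angle N N = PI / 2.
Proof. unfold angle. field. pose proof HN_pos; lra. Qed.

Lemma angle_first : angle N 0 = 0.
Proof. unfold angle. simpl. lra. Qed.

Lemma sin_angle_lt i : (i < N)%nat -> sin (angle N i) < sin (angle N (S i)).
Proof.
intros Hi. destruct (angle_range i ltac:(lia)), (angle_range (S i) Hi).
apply sin_increasing_1; try lra. pose proof (angle_step i). pose proof PI_RGT_0.
assert (0 < PI / 2 / INR N) by (apply Rdiv_lt_0_compat; [lra|exact HN_pos]). lra.
Qed.

Lemma sin_angle_le i j : (i <= j)%nat -> (j <= N)%nat -> sin (angle N i) <= sin (angle N j).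
Proof.
intros Hij HjN. induction Hij as [|j Hij IH]; [lra|].
pose proof (IH ltac:(lia)). pose proof (sin_angle_lt j HjN). lra.
Qed.

(* The staircase inscribed in a quarter of the unit disc has area close to [PI / 4]. *)
Lemma staircase_sum :
  PI / 4 - PI / 2 / INR N
  <= fsum (fun i => cos (angle N (S i)) * (sin (angle N (S i)) - sin (angle N i))) N.
Proof.
set (D := PI / 2 / INR N). pose proof PI_RGT_0.
assert (HD : 0 < D) by (apply Rdiv_lt_0_compat; [lra|exact HN_pos]).
assert (H1 : fsum (fun i => D * cos (angle N (S i)) ^ 2) N
  <= fsum (fun i => cos (angle N (S i)) * (sin (angle N (S i)) - sin (angle N i))) N).
{ apply fsum_le. intros i Hi.
  destruct (angle_range i ltac:(lia)), (angle_range (S i) Hi).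
  pose proof (angle_step i) as Hstep. fold D in Hstep.
  pose proof (sin_sub_ge (angle N i) (angle N (S i)) ltac:(lra) ltac:(lra) ltac:(lra)) as Hsin.
  rewrite Hstep in Hsin.
  pose proof (cos_ge_0 (angle N (S i)) ltac:(lra) ltac:(lra)). simpl. nra. }
set (G := fun x => (x + sin x * cos x) / 2).
assert (H2 : fsum (fun i => G (angle N (S i)) - G (angle N i)) N
  <= fsum (fun i => D * cos (angle N i) ^ 2) N).
{ apply fsum_le. intros i Hi.
  destruct (angle_range i ltac:(lia)), (angle_range (S i) Hi).
  pose proof (angle_step i) as Hstep. fold D in Hstep.
  replace D with (angle N (S i) - angle N i) by apply angle_step.
  apply cos2_primitive_sub_le; lra. }
rewrite (fsum_telescope (fun i => G (angle N i))) in H2.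
rewrite (fsum_shift (fun i => D * cos (angle N i) ^ 2)) in H1.
unfold G in H2. rewrite angle_last, angle_first, sin_0, cos_PI2 in H2.
rewrite angle_last, angle_first, cos_PI2, cos_0 in H1.
lra.
Qed.

End Angles.

Lemma Rabs_fst_le_dist2 x y : Rabs (fst x - fst y) <= dist2 x y.
Proof. apply Rabs_le_norm. Qed.

Lemma Rabs_snd_le_dist2 x y : Rabs (snd x - snd y) <= dist2 x y.
Proof. unfold dist2. rewrite Rplus_comm. apply Rabs_le_norm. Qed.

Lemma dist2_le_of_sq x y t : 0 <= t ->
  (fst x - fst y)^2 + (snd x - snd y)^2 <= t^2 -> dist2 x y <= t.
Proof. intros Ht H. unfold dist2. rewrite <- (sqrt_pow2 t Ht). apply sqrt_le_1_alt, H. Qed.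

Lemma closed_disc_bounded2 p t : bounded2 (closed_disc p t).
Proof.
apply (box_bounded2 _ (Rabs (fst p) + Rabs (snd p) + Rabs t)). intros z Hz.
unfold closed_disc in Hz. pose proof (Rabs_fst_le_dist2 p z); pose proof (Rabs_snd_le_dist2 p z).
pose proof (Rle_abs t); pose proof (Rabs_pos (fst p)); pose proof (Rabs_pos (snd p)).
pose proof (Rabs_triang_inv (fst z) (fst p)); pose proof (Rabs_triang_inv (snd z) (snd p)).
rewrite (Rabs_minus_sym (fst z)), (Rabs_minus_sym (snd z)) in *.
unfold in_box. split; lra.
Qed.

(* Step [k < N] of a staircase inscribed in the disc: the rectangle of half-width
   [t cos a_(k+1)] between the heights [t sin a_k] and [t sin a_(k+1)], above the
   centre for [i = k] and mirrored below it for [i = N + k].  A small vertical gap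
   keeps the closed rectangles pairwise disjoint. *)
Definition stair_rect (p : pt) (t : R) (N i : nat) : rect :=
  let k := if (i <? N)%nat then i else (i - N)%nat in
  let y0 := t * sin (angle N k) in
  let y1 := t * sin (angle N (S k)) in
  let w := t * cos (angle N (S k)) in
  let gap := (y1 - y0) / INR N in
  if (i <? N)%nat then (fst p - w, fst p + w, snd p + y0 + gap, snd p + y1)
  else (fst p - w, fst p + w, snd p - y1, snd p - y0 - gap).

Section Staircase.
Variables (p : pt) (t : R) (N : nat).
Hypothesis Ht : 0 < t.
Hypothesis HN : (2 <= N)%nat.

Let HN1 : (1 <= N)%nat.
Proof. lia. Qed.

Let HNR : 2 <= INR N.
Proof. replace 2 with (INR 2) by (simpl; lra). apply le_INR, HN. Qed.

Lemma stair_step k : (k < N)%nat ->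
  0 <= t * sin (angle N k) < t * sin (angle N (S k)) /\ 0 <= t * cos (angle N (S k)) /\
  (t * cos (angle N (S k)))^2 + (t * sin (angle N (S k)))^2 = t^2.
Proof.
intros Hk. destruct (angle_range N HN1 k ltac:(lia)), (angle_range N HN1 (S k) Hk).
pose proof (sin_angle_lt N HN1 k Hk). pose proof PI_RGT_0.
split; [split|split].
- apply Rmult_le_pos; [lra|apply sin_ge_0; lra].
- apply Rmult_lt_compat_l; lra.
- apply Rmult_le_pos; [lra|apply cos_ge_0; lra].
- pose proof (sin2_cos2 (angle N (S k))). unfold Rsqr in *. nra.
Qed.

Lemma stair_height_le i j : (i <= j)%nat -> (j <= N)%nat ->
  t * sin (angle N i) <= t * sin (angle N j).
Proof. intros. apply Rmult_le_compat_l; [lra|apply sin_angle_le; auto]. Qed.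

Lemma gap_pos k : (k < N)%nat ->
  0 < (t * sin (angle N (S k)) - t * sin (angle N k)) / INR N.
Proof. intros Hk. destruct (stair_step k Hk). apply Rdiv_lt_0_compat; lra. Qed.

Lemma gap_lt k : (k < N)%nat ->
  (t * sin (angle N (S k)) - t * sin (angle N k)) / INR N
  < t * sin (angle N (S k)) - t * sin (angle N k).
Proof.
intros Hk. destruct (stair_step k Hk).
apply (Rmult_lt_reg_r (INR N)); [lra|].
unfold Rdiv. rewrite Rmult_assoc, Rinv_l by lra. nra.
Qed.

Lemma stair_rect_ok i : (i < 2 * N)%nat -> rect_ok (stair_rect p t N i).
Proof.
intros Hi. unfold stair_rect. destruct (Nat.ltb_spec i N).
- destruct (stair_step i H) as [_ [Hw _]]. pose proof (gap_lt i H). simpl. lra.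
- destruct (stair_step (i - N) ltac:(lia)) as [_ [Hw _]]. pose proof (gap_lt (i - N) ltac:(lia)).
  simpl. lra.
Qed.

Lemma stair_rect_in_disc i z : (i < 2 * N)%nat ->
  in_rect (stair_rect p t N i) z -> closed_disc p t z.
Proof.
intros Hi. unfold closed_disc, stair_rect. destruct (Nat.ltb_spec i N) as [Hk|Hk];
  set (k := if (i <? N)%nat then i else (i - N)%nat); simpl; intros [Hx Hy];
  apply dist2_le_of_sq; try lra.
- destruct (stair_step i Hk) as [[Hy0 _] [Hw Hc]]. pose proof (gap_pos i Hk).
  assert ((fst p - fst z)^2 <= (t * cos (angle N (S i)))^2) by nra.
  assert ((snd p - snd z)^2 <= (t * sin (angle N (S i)))^2) by nra. lra.
- destruct (stair_step (i - N) ltac:(lia)) as [[Hy0 _] [Hw Hc]].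
  pose proof (gap_pos (i - N) ltac:(lia)).
  assert ((fst p - fst z)^2 <= (t * cos (angle N (S (i - N))))^2) by nra.
  assert ((snd p - snd z)^2 <= (t * sin (angle N (S (i - N))))^2) by nra. lra.
Qed.

Lemma stair_rects_disjoint i j : (i < j < 2 * N)%nat ->
  disjoint_rects (stair_rect p t N i) (stair_rect p t N j).
Proof.
intros Hij z. unfold stair_rect.
destruct (Nat.ltb_spec i N), (Nat.ltb_spec j N); try lia; simpl; intros [_ Hzi] [_ Hzj].
- pose proof (gap_pos j H0). pose proof (stair_height_le (S i) j ltac:(lia) ltac:(lia)). lra.
- destruct (stair_step i H) as [[Hy0 _] _]. pose proof (gap_pos i H).
  destruct (stair_step (j - N) ltac:(lia)) as [[Hy0' _] _]. pose proof (gap_pos (j - N) ltac:(lia)).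
  lra.
- pose proof (gap_pos (j - N) ltac:(lia)).
  pose proof (stair_height_le (S (i - N)) (j - N) ltac:(lia) ltac:(lia)). lra.
Qed.

Lemma stair_rects_area :
  fsum (fun i => rect_area (stair_rect p t N i)) (2 * N)
  = 4 * t^2 * (1 - 1 / INR N) *
    fsum (fun i => cos (angle N (S i)) * (sin (angle N (S i)) - sin (angle N i))) N.
Proof.
replace (2 * N)%nat with (N + N)%nat by lia. rewrite fsum_add.
rewrite (fsum_ext _ (fun i => 2 * t^2 * (1 - 1 / INR N) *
  (cos (angle N (S i)) * (sin (angle N (S i)) - sin (angle N i))))).
rewrite (fsum_ext (fun i => rect_area (stair_rect p t N (N + i)))
  (fun i => 2 * t^2 * (1 - 1 / INR N) *
  (cos (angle N (S i)) * (sin (angle N (S i)) - sin (angle N i))))).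
- rewrite fsum_scal. ring.
- intros i Hi. unfold stair_rect. destruct (Nat.ltb_spec (N + i) N); [lia|].
  replace (N + i - N)%nat with i by lia. simpl. field. lra.
- intros i Hi. unfold stair_rect. destruct (Nat.ltb_spec i N); [|lia].
  simpl. field. lra.
Qed.

Lemma area_closed_disc_ge_staircase :
  PI * t^2 * (1 - 3 / INR N) <= area (closed_disc p t).
Proof.
pose proof (fsum_rect_area_le_area (closed_disc p t) (stair_rect p t N) (2 * N)
  (closed_disc_bounded2 p t) stair_rect_ok stair_rects_disjoint
  (fun i z Hi Hz => stair_rect_in_disc i z Hi Hz)) as Hsum.
rewrite stair_rects_area in Hsum. pose proof (staircase_sum N HN1). pose proof PI_RGT_0.
set (g := 1 / INR N) in *.
assert (Hg : 0 < g <= 1 / 2).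
{ unfold g. split; [apply Rdiv_lt_0_compat; lra|].
  apply (Rmult_le_reg_r (INR N)); [lra|]. unfold Rdiv. rewrite Rmult_1_l, Rinv_l by lra. lra. }
replace (PI / 2 / INR N) with (PI / 2 * g) in * by (unfold g; field; lra).
replace (3 / INR N) with (3 * g) by (unfold g; field; lra).
assert (0 <= 4 * t^2 * (1 - g)) by nra.
assert (PI * t^2 * (1 - 3 * g) <= 4 * t^2 * (1 - g) * (PI / 4 - PI / 2 * g)).
{ replace (4 * t^2 * (1 - g) * (PI / 4 - PI / 2 * g)) with (PI * t^2 * ((1 - g) * (1 - 2 * g)))
    by field.
  apply Rmult_le_compat_l; nra. }
nra.
Qed.

End Staircase.

Lemma area_closed_disc p t : 0 < t -> PI * t^2 <= area (closed_disc p t).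
Proof.
intros Ht. pose proof PI_RGT_0. apply Rnot_lt_le; intros Hlt.
set (gap := PI * t^2 - area (closed_disc p t)).
destruct (INR_archimed gap (3 * PI * t^2)) as [N HN]; [unfold gap; lra|].
pose proof (area_closed_disc_ge_staircase p t (N + 2) Ht ltac:(lia)).
rewrite plus_INR in H0. simpl (INR 2) in H0. pose proof (pos_INR N).
assert (PI * t^2 * (3 / (INR N + (1 + 1))) < gap).
{ apply (Rmult_lt_reg_r (INR N + (1 + 1))); [lra|]. unfold Rdiv.
  replace (PI * t^2 * (3 * / (INR N + (1 + 1))) * (INR N + (1 + 1))) with (3 * PI * t^2)
    by (field; lra).
  nra. }
unfold gap in *. nra.
Qed.

(** * Diameters and half discs *)

Lemma dist2_triangle x y z : dist2 x z <= dist2 x y + dist2 y z.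
Proof.
unfold dist2. pose proof (triangle (fst x) (snd x) (fst z) (snd z) (fst y) (snd y)) as H.
unfold dist_euc in H. rewrite !Rsqr_pow2 in H. exact H.
Qed.

Lemma dist2_sym x y : dist2 x y = dist2 y x.
Proof. unfold dist2. f_equal. ring. Qed.

Lemma dist2_nonneg x y : 0 <= dist2 x y.
Proof. apply sqrt_pos. Qed.

Lemma dists_bound B : bounded2 B -> bound (dists B).
Proof.
intros HB. destruct (bounded2_box B HB) as [M [HM0 HM]]. exists (4 * M).
intros d [x [y [Hx [Hy ->]]]]. destruct (HM x Hx), (HM y Hy).
eapply Rle_trans; [apply dist2_le_Rabs|].
pose proof (Rabs_triang (fst x) (- fst y)); pose proof (Rabs_triang (snd x) (- snd y)).
rewrite Rabs_Ropp in *. unfold Rminus. lra.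
Qed.

Lemma diam_lub B x0 : bounded2 B -> B x0 -> is_lub (dists B) (diam B).
Proof.
intros HB Hx0. unfold diam. apply epsilon_spec.
destruct (completeness (dists B) (dists_bound B HB)) as [m Hm];
  [exists (dist2 x0 x0), x0, x0; auto|]. exists m; exact Hm.
Qed.

Lemma dist2_le_diam B x y : bounded2 B -> B x -> B y -> dist2 x y <= diam B.
Proof. intros HB Hx Hy. apply (diam_lub B x HB Hx). exists x, y. auto. Qed.

Lemma diam_le B K x0 : bounded2 B -> B x0 ->
  (forall x y, B x -> B y -> dist2 x y <= K) -> diam B <= K.
Proof.
intros HB Hx0 H. apply (diam_lub B x0 HB Hx0). intros d [x [y [Hx [Hy ->]]]]. auto.
Qed.

Lemma le_of_forall_lt_le t K : 0 <= K -> (forall s, 0 < s < t -> s <= K) -> t <= K.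
Proof.
intros HK H. apply Rnot_lt_le; intros Hlt.
pose proof (H ((K + t) / 2) ltac:(lra)). lra.
Qed.

Lemma le_sqrt_of_sq_le s X : 0 <= s -> s^2 <= X -> s <= sqrt X.
Proof. intros Hs H. rewrite <- (sqrt_pow2 s Hs). apply sqrt_le_1_alt, H. Qed.

Definition unit_vec (u : pt) : Prop := fst u ^ 2 + snd u ^ 2 = 1.

Definition along (x u : pt) (k : R) : pt := (fst x + k * fst u, snd x + k * snd u).

Definition half_disc (p u : pt) (s : R) : pt -> Prop :=
  fun z => dist2 p z <= s /\ 0 <= (fst z - fst p) * fst u + (snd z - snd p) * snd u.

Lemma dist2_along x u a b : unit_vec u -> dist2 (along x u a) (along x u b) = Rabs (a - b).
Proof.
unfold unit_vec, along, dist2. cbn [fst snd]. intros Hu.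
replace ((fst x + a * fst u - (fst x + b * fst u)) ^ 2 + (snd x + a * snd u - (snd x + b * snd u)) ^ 2)
  with ((a - b)^2) by (rewrite <- (Rmult_1_r ((a - b)^2)), <- Hu; ring).
rewrite <- sqrt_Rsqr_abs, Rsqr_pow2. reflexivity.
Qed.

Lemma exists_unit_direction x c : exists u, unit_vec u /\ c = along x u (dist2 x c).
Proof.
destruct (Req_dec (dist2 x c) 0) as [H0|H0].
- exists (1, 0). split; [unfold unit_vec; simpl; ring|].
  rewrite H0. unfold dist2 in H0.
  apply sqrt_eq_0 in H0; [|apply Rplus_le_le_0_compat; apply pow2_ge_0].
  destruct x as [x1 x2], c as [c1 c2]. unfold along. cbn [fst snd] in *.
  pose proof (pow2_ge_0 (x1 - c1)); pose proof (pow2_ge_0 (x2 - c2)).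
  assert (Hx : (x1 - c1) ^ 2 = 0) by lra. assert (Hy : (x2 - c2) ^ 2 = 0) by lra.
  rewrite <- Rsqr_pow2 in Hx, Hy. apply Rsqr_eq_0 in Hx, Hy. f_equal; lra.
- pose proof (dist2_nonneg x c). set (rho := dist2 x c) in *.
  exists ((fst c - fst x) / rho, (snd c - snd x) / rho). split.
  + unfold unit_vec. simpl. unfold rho, dist2.
    assert (Hpos : 0 <= (fst x - fst c) ^ 2 + (snd x - snd c) ^ 2)
      by (apply Rplus_le_le_0_compat; apply pow2_ge_0).
    field_simplify; [|exact H0]. rewrite pow2_sqrt by exact Hpos. field.
    intros Hz. apply H0. unfold rho, dist2. rewrite Hz. apply sqrt_0.
  + destruct c as [c1 c2]. unfold along. simpl. f_equal; field; exact H0.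
Qed.

Lemma area_half_disc p u s : 0 < s -> PI * s^2 / 2 <= area (half_disc p u s).
Proof.
intros Hs.
set (u' := (- fst u, - snd u)).
assert (Hb : forall v, bounded2 (half_disc p v s)).
{ intros v. apply (bounded2_sub _ _ (closed_disc_bounded2 p s)). intros z [h _]; exact h. }
assert (Hcover : area (closed_disc p s) <= area (union2 (half_disc p u s) (half_disc p u' s))).
{ apply area_mono; [apply bounded2_union; auto|]. intros z Hz. unfold half_disc, u'. simpl.
  destruct (Rle_dec 0 ((fst z - fst p) * fst u + (snd z - snd p) * snd u));
    [left|right]; split; auto; lra. }
assert (Hrefl : area (half_disc p u' s) <= area (half_disc p u s)).
{ apply (area_le_point_reflection _ _ p); auto. intros z [h1 h2]. unfold u' in h2. simpl in h2.
  split; cbn [fst snd].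
  - unfold dist2 in *. cbn [fst snd].
    replace ((fst p - (2 * fst p - fst z)) ^ 2 + (snd p - (2 * snd p - snd z)) ^ 2)
      with ((fst p - fst z) ^ 2 + (snd p - snd z) ^ 2) by ring. exact h1.
  - nra. }
pose proof (area_closed_disc p s Hs). pose proof (area_union_le _ _ (Hb u) (Hb u')). lra.
Qed.

Lemma half_disc_in_disc x u c r k s : unit_vec u -> c = along x u (dist2 x c) ->
  dist2 x c <= k -> k - dist2 x c + s <= r ->
  forall z, half_disc (along x u k) u s z -> closed_disc c r z.
Proof.
intros Hu Hc Hk Hr z [Hz _]. unfold closed_disc.
assert (Hcc : dist2 c (along x u k) = k - dist2 x c).
{ rewrite Hc at 1. rewrite (dist2_along x u _ _ Hu), Rabs_left1 by lra. ring. }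
pose proof (dist2_triangle c (along x u k) z). lra.
Qed.

Lemma half_disc_far x u k s z : unit_vec u -> 0 <= k ->
  half_disc (along x u k) u s z -> k <= dist2 x z.
Proof.
unfold unit_vec, half_disc, along, dist2. cbn [fst snd]. intros Hu Hk [_ Hz].
apply le_sqrt_of_sq_le; [exact Hk|].
set (w1 := fst z - (fst x + k * fst u)) in *.
set (w2 := snd z - (snd x + k * snd u)) in *.
replace ((fst x - fst z) ^ 2 + (snd x - snd z) ^ 2)
  with (k^2 * (fst u ^ 2 + snd u ^ 2) + 2 * k * (w1 * fst u + w2 * snd u) + (w1^2 + w2^2))
  by (unfold w1, w2; ring).
rewrite Hu. nra.
Qed.

Lemma area_add_half_disc C x u k s eta : bounded2 C -> C x -> unit_vec u ->
  0 < eta -> diam C + eta <= k -> 0 < s ->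
  area C + PI * s^2 / 2 <= area (union2 C (half_disc (along x u k) u s)).
Proof.
intros HC Hx Hu Heta Hk Hs.
assert (Hdiam : 0 <= diam C)
  by (eapply Rle_trans; [apply dist2_nonneg|apply (dist2_le_diam C x x HC Hx Hx)]).
assert (Hsep : forall y z, C y -> half_disc (along x u k) u s z -> eta <= dist2 y z).
{ intros y z Hy Hz. pose proof (half_disc_far x u k s z Hu ltac:(lra) Hz).
  pose proof (dist2_le_diam C x y HC Hx Hy). pose proof (dist2_triangle x y z). lra. }
assert (Hhalf : bounded2 (half_disc (along x u k) u s)).
{ apply (bounded2_sub _ _ (closed_disc_bounded2 (along x u k) s)). intros z [h _]; exact h. }
pose proof (area_add_separated _ _ eta HC Hhalf Heta Hsep).
pose proof (area_half_disc (along x u k) u s Hs). lra.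
Qed.

(* If [|x - c| + r] exceeds [diam C] by [t], then half-discs of every radius
   [s < t] fit in [D] away from [C]. *)
Lemma dist_to_disc_le C c r x y : bounded2 C -> C c -> C x -> closed_disc c r y ->
  dist2 x y <= diam C + sqrt (2 * (area (union2 C (closed_disc c r)) - area C) / PI).
Proof.
intros HC Hc Hx Hy. unfold closed_disc in Hy. pose proof PI_RGT_0.
set (K := sqrt (2 * (area (union2 C (closed_disc c r)) - area C) / PI)).
assert (HK : 0 <= K) by apply sqrt_pos.
pose proof (dist2_triangle x c y). pose proof (dist2_le_diam C x c HC Hx Hc).
enough (dist2 x c + r - diam C <= K) by lra.
apply le_of_forall_lt_le; [exact HK|]. intros s Hs.
destruct (exists_unit_direction x c) as [u [Hu Hcu]].
set (k := diam C + (dist2 x c + r - diam C - s)).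
assert (Hsub : forall z, half_disc (along x u k) u s z -> closed_disc c r z)
  by (apply half_disc_in_disc; auto; unfold k; lra).
pose proof (area_add_half_disc C x u k s (dist2 x c + r - diam C - s) HC Hx Hu
  ltac:(lra) ltac:(unfold k; lra) ltac:(lra)).
assert (area (union2 C (half_disc (along x u k) u s)) <= area (union2 C (closed_disc c r))).
{ apply area_mono; [apply bounded2_union; auto; apply closed_disc_bounded2|].
  intros z [h|h]; [left; exact h|right; apply Hsub, h]. }
apply le_sqrt_of_sq_le; [lra|].
apply (Rmult_le_reg_r PI); [lra|]. unfold Rdiv. rewrite Rmult_assoc, Rinv_l by lra. lra.
Qed.

Theorem lemma4 (C : pt -> Prop) (c : pt) (r : R) :
  compact2 C -> 0 < r -> C c ->
  diam (union2 C (closed_disc c r)) <=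
  Rmax (diam C + sqrt (2 * (area (union2 C (closed_disc c r)) - area C) / PI))
       (sqrt (4 * area (union2 C (closed_disc c r)) / PI)).
Proof.
intros [_ HC] Hr Hc. pose proof PI_RGT_0.
assert (HU : bounded2 (union2 C (closed_disc c r))) by (apply bounded2_union; [exact HC|apply closed_disc_bounded2]).
set (RHS := Rmax _ _).
assert (Hnear : diam C + sqrt (2 * (area (union2 C (closed_disc c r)) - area C) / PI) <= RHS)
  by apply Rmax_l.
assert (Hdisc : 2 * r <= RHS).
{ eapply Rle_trans; [|apply Rmax_r]. apply le_sqrt_of_sq_le; [lra|].
  assert (PI * r^2 <= area (union2 C (closed_disc c r))).
  { eapply Rle_trans; [apply (area_closed_disc c r Hr)|].
    apply area_mono; [exact HU|]. intros z Hz; right; exact Hz. }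
  apply (Rmult_le_reg_r PI); [lra|]. unfold Rdiv. rewrite Rmult_assoc, Rinv_l by lra. nra. }
assert (Hcross : forall x y, C x -> closed_disc c r y -> dist2 x y <= RHS).
{ intros x y Hx Hy. pose proof (dist_to_disc_le C c r x y HC Hc Hx Hy). lra. }
apply (diam_le _ RHS c HU (or_introl Hc)). intros x y [Hx|Hx] [Hy|Hy].
- pose proof (dist2_le_diam C x y HC Hx Hy). pose proof (sqrt_pos (2 * (area (union2 C (closed_disc c r)) - area C) / PI)).
  lra.
- apply Hcross; auto.
- rewrite dist2_sym. apply Hcross; auto.
- unfold closed_disc in Hx, Hy. pose proof (dist2_triangle x c y).
  rewrite (dist2_sym x c) in *. lra.
Qed.
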